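(* Let $M$ be a compact connected $1$-manifold (the circle $\mathrm{S}^1$ or a closed interval), and let $G$ be a group acting faithfully by homeomorphisms of $M$, generated by a finite symmetric set $\mathcal{G}$ (i.e. $\mathcal{G}=\mathcal{G}^{-1}$), with $|\mathcal{G}|\ge 2$. Let $\varepsilon > \log(|\mathcal{G}|-1)$. Then there is a homeomorphism $h$ of $M$ such that for every $g \in \mathcal{G}$, the homeomorphism $h g h^{-1}$ is Lipschitz with Lipschitz constant at most $e^{\varepsilon}$ (with respect to the standard metric of $M$, normalized to have total length $1$). In particular, $G$ is topologically conjugate to a group of Lipschitz homeomorphisms of $M$.
   Context: For $f\in G$, the word length $\|f\|$ is the minimal number of factors needed to write $f$ as a product of elements of $\mathcal{G}$ (with $\|id\|=0$). *)

From Stdlib Require Export Reals List.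
Export ListNotations.
Open Scope R_scope.

Inductive Manifold1 : Type := Circle | Interval.

(* Carrier: the circle S^1 = R/Z is represented by the fundamental domain [0,1);
   the closed interval by [0,1]. *)
Definition carrier_pred (M : Manifold1) (x : R) : Prop :=
  match M with
  | Circle => 0 <= x < 1
  | Interval => 0 <= x <= 1
  end.

Definition pt (M : Manifold1) : Type := { x : R | carrier_pred M x }.

(* Standard metric, total length 1: arc-length on the circle of length 1,
   usual distance on [0,1]. *)
Definition dist (M : Manifold1) (x y : pt M) : R :=
  match M with
  | Circle => Rmin (Rabs (proj1_sig x - proj1_sig y))
                   (1 - Rabs (proj1_sig x - proj1_sig y))
  | Interval => Rabs (proj1_sig x - proj1_sig y)
  end.

Definition continuous_on (M : Manifold1) (f : pt M -> pt M) : Prop :=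
  forall x (eps : R), 0 < eps -> exists delta, 0 < delta /\
    forall y, dist M x y < delta -> dist M (f x) (f y) < eps.

Definition inverse_of (M : Manifold1) (f g : pt M -> pt M) : Prop :=
  (forall x, g (f x) = x) /\ (forall x, f (g x) = x).

Definition is_homeo_with_inv (M : Manifold1) (f g : pt M -> pt M) : Prop :=
  inverse_of M f g /\ continuous_on M f /\ continuous_on M g.

Definition is_homeo (M : Manifold1) (f : pt M -> pt M) : Prop :=
  exists g, is_homeo_with_inv M f g.

Definition lipschitz_with (M : Manifold1) (L : R) (f : pt M -> pt M) : Prop :=
  forall x y, dist M (f x) (f y) <= L * dist M x y.

(* Let q = exp (-eps), so that q (|G| - 1) < 1.  For points x, y set
     D(x, y) = sum over the non-backtracking words w in the generators of q^|w| len(w [x, y]),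
   where len is the length of the arc from x to y (counterclockwise on the circle).  As there
   are at most |G| (|G| - 1)^(n - 1) such words of length n the series converges; D dominates
   len, is continuous and additive along arcs, and splitting the words according to their
   first letter gives D(g x, g y) <= D(x, y) / q for every generator g.  Measuring positions
   by D-length from a base point, normalised by the total D-length of M, gives a
   homeomorphism h turning D (on the circle, the smaller of D(x, y) and D(y, x)) into a
   multiple of the standard metric, so every h g h^-1 is exp(eps)-Lipschitz.  Orientation-reversing generators of the circle swap the endpoints
   of the arc so that it stays counterclockwise. *)

From Coquelicot Require Import Coquelicot.
From Stdlib Require Import Reals Lra Lia Ranalysis5 Classical ClassicalEpsilon.
Open Scope R_scope.

Fixpoint rsum (n : nat) (F : nat -> R) : R :=
  match n with O => 0 | S m => rsum m F + F m end.

Lemma rsum_ext n F G : (forall j, (j < n)%nat -> F j = G j) -> rsum n F = rsum n G.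
Proof.
  induction n as [|n IH]; simpl; intros H; auto.
  rewrite IH by (intros; apply H; lia). rewrite H by lia. reflexivity.
Qed.

Lemma rsum_add n F G : rsum n F + rsum n G = rsum n (fun j => F j + G j).
Proof. induction n as [|n IH]; simpl; [lra|]. rewrite <- IH. lra. Qed.

Lemma rsum_le n F G : (forall j, (j < n)%nat -> F j <= G j) -> rsum n F <= rsum n G.
Proof.
  induction n as [|n IH]; simpl; intros H; [lra|].
  assert (F n <= G n) by (apply H; lia).
  assert (rsum n F <= rsum n G) by (apply IH; intros; apply H; lia). lra.
Qed.

Lemma rsum_const n c : rsum n (fun _ => c) = INR n * c.
Proof. induction n as [|n IH]; simpl rsum; [simpl; lra|]. rewrite IH, S_INR. lra. Qed.

Lemma rsum_bound n F B : (forall j, (j < n)%nat -> F j <= B) -> rsum n F <= INR n * B.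
Proof. intros H. rewrite <- rsum_const. apply rsum_le; auto. Qed.

Definition drop_term (s : nat) (F : nat -> R) (j : nat) : R := if Nat.eqb s j then 0 else F j.

Lemma rsum_drop_term n F s : (s < n)%nat -> rsum n F = F s + rsum n (drop_term s F).
Proof.
  induction n as [|n IH]; intros Hs; [lia|]. simpl. unfold drop_term at 2.
  destruct (Nat.eqb_spec s n) as [->|Hne].
  - rewrite (rsum_ext n (drop_term n F) F); [lra|].
    intros j Hj. unfold drop_term. destruct (Nat.eqb_spec n j); [lia|auto].
  - rewrite IH by lia. lra.
Qed.

Lemma rsum_drop_term_le n s B F : (s < n)%nat ->
  (forall j, (j < n)%nat -> F j <= B) -> 0 <= B -> rsum n (drop_term s F) <= (INR n - 1) * B.
Proof.
  intros Hs HF HB.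
  assert (rsum n (drop_term s F) <= rsum n (drop_term s (fun _ => B))).
  { apply rsum_le. intros j Hj. unfold drop_term. destruct (s =? j)%nat; [lra|auto]. }
  pose proof (rsum_drop_term n (fun _ => B) s Hs). rewrite rsum_const in *. lra.
Qed.

Lemma ex_series_geom_bound (u : nat -> R) C r :
  0 <= r < 1 -> (forall n, 0 <= u n <= C * r ^ n) -> ex_series u.
Proof.
  intros Hr Hu. apply (ex_series_le u (fun n => C * r ^ n)).
  - intros n. change (norm (u n)) with (Rabs (u n)). rewrite Rabs_pos_eq; apply Hu.
  - apply (ex_series_scal_l C (fun n => r ^ n)), ex_series_geom. rewrite Rabs_pos_eq; lra.
Qed.

Lemma Series_ge0 (u : nat -> R) : (forall n, 0 <= u n) -> ex_series u -> 0 <= Series u.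
Proof.
  intros Hu Hex. replace 0 with (Series (fun n => 0 * u n)) by (rewrite Series_scal_l; ring).
  apply Series_le; auto. intros n. specialize (Hu n). lra.
Qed.

Lemma Series_ge_first (u : nat -> R) : (forall n, 0 <= u n) -> ex_series u -> u O <= Series u.
Proof.
  intros Hu Hex. rewrite Series_incr_1 by auto.
  assert (0 <= Series (fun n => u (S n))); [|lra].
  apply Series_ge0; auto. now apply ex_series_incr_1 in Hex.
Qed.

Lemma Series_small_of_head C r e : 0 <= r < 1 -> 0 < e ->
  exists M eta, 0 < eta /\ forall u : nat -> R, (forall n, 0 <= u n <= C * r ^ n) ->
    (forall n, (n < M)%nat -> u n <= eta) -> Series u < e.
Proof.
  intros Hr He. set (C' := Rabs C + 1).
  destruct (pow_lt_1_zero r ltac:(rewrite Rabs_pos_eq; lra) (e / 2 * (1 - r) / C')) as [M0 HM0].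
  { unfold C'. pose proof (Rabs_pos C). apply Rdiv_lt_0_compat; nra. }
  set (M := S M0). assert (HM : 0 < INR M) by (apply lt_0_INR; unfold M; lia).
  exists M, (e / 2 / INR M). split; [apply Rdiv_lt_0_compat; lra|]. intros u Hu Hhead.
  assert (Hex : ex_series u) by (apply (ex_series_geom_bound u C r); auto).
  assert (HrM : 0 <= r ^ M) by (apply pow_le; lra).
  assert (Htail_small : C' * r ^ M < e / 2 * (1 - r)).
  { specialize (HM0 M ltac:(unfold M; lia)). rewrite Rabs_pos_eq in HM0 by lra.
    unfold C' in *. pose proof (Rabs_pos C).
    apply Rmult_lt_reg_r with (/ (Rabs C + 1)); [apply Rinv_0_lt_compat; lra|].
    rewrite Rmult_comm, <- Rmult_assoc, Rinv_l, Rmult_1_l by lra. exact HM0. }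
  rewrite (Series_incr_n u M) by (unfold M; lia || auto).
  assert (Hhead_sum : sum_f_R0 u (pred M) <= e / 2).
  { apply Rle_trans with (sum_f_R0 (fun _ => e / 2 / INR M) (pred M)).
    - apply sum_Rle. intros n Hn. apply Hhead. unfold M in *. simpl in Hn. lia.
    - rewrite sum_cte. replace (S (pred M)) with M by (unfold M; reflexivity).
      right. field. lra. }
  assert (Htail : Series (fun n => u (M + n)%nat) <= C' * r ^ M / (1 - r)).
  { unfold Rdiv. rewrite <- Series_geom, <- Series_scal_l by (rewrite Rabs_pos_eq; lra).
    apply Series_le.
    - intros n. specialize (Hu (M + n)%nat). rewrite pow_add in Hu.
      pose proof (Rle_abs C). assert (0 <= r ^ M * r ^ n) by (apply Rmult_le_pos; apply pow_le; lra).
      unfold C'. split; [lra|]. nra.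
    - apply (ex_series_scal_l _ (fun n => r ^ n)), ex_series_geom. rewrite Rabs_pos_eq; lra. }
  assert (C' * r ^ M / (1 - r) < e / 2).
  { apply Rmult_lt_reg_r with (1 - r); [lra|]. unfold Rdiv. rewrite Rmult_assoc, Rinv_l by lra. lra. }
  lra.
Qed.

Lemma common_delta (m : nat) (P : nat -> R -> Prop) :
  (forall j d1 d2, 0 < d1 <= d2 -> P j d2 -> P j d1) ->
  (forall j, (j < m)%nat -> exists d, 0 < d /\ P j d) ->
  exists d, 0 < d /\ forall j, (j < m)%nat -> P j d.
Proof.
  intros Hmon. induction m as [|m IH]; intros H.
  - exists 1. split; [lra|]. intros; lia.
  - destruct IH as [d1 [Hd1 H1]]; [intros j Hj; apply H; lia|].
    destruct (H m) as [d2 [Hd2 H2]]; [lia|].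
    exists (Rmin d1 d2). split; [now apply Rmin_glb_lt|].
    pose proof (Rmin_l d1 d2). pose proof (Rmin_r d1 d2).
    assert (0 < Rmin d1 d2) by now apply Rmin_glb_lt.
    intros j Hj. destruct (Nat.eq_dec j m) as [->|Hne].
    + apply (Hmon m _ d2); auto.
    + apply (Hmon j _ d1); auto. apply H1; lia.
Qed.

Section WordSeries.

Variables (A : Type) (k : nat) (act : nat -> A -> A) (inv : nat -> nat).

(* [word_sum c n (Some s) a] is the sum of [c (act s_n (... (act s_1 a)))] over the
   non-backtracking words (s_(i+1) <> inv s_i) of length n in the letters [0..k-1]
   with s_1 <> s; with [None] the first letter is unconstrained. *)
Fixpoint word_sum (c : A -> R) (n : nat) (forbidden : option nat) (a : A) : R :=
  match n with
  | O => c a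
  | S m =>
      let F j := word_sum c m (Some (inv j)) (act j a) in
      match forbidden with
      | None => rsum k F
      | Some s => rsum k (drop_term s F)
      end
  end.

Lemma word_sum_add_rel (rel : A -> A -> A -> Prop) c1 c2 c3 :
  (forall j a b g, (j < k)%nat -> rel a b g -> rel (act j a) (act j b) (act j g)) ->
  (forall a b g, rel a b g -> c1 a + c2 b = c3 g) ->
  forall n f a b g, rel a b g -> word_sum c1 n f a + word_sum c2 n f b = word_sum c3 n f g.
Proof.
  intros Hact Hc n. induction n as [|n IH]; intros f a b g Hr; simpl; auto.
  destruct f as [s|]; rewrite rsum_add; apply rsum_ext; intros j Hj;
    [unfold drop_term; destruct (s =? j)%nat; [lra|]|]; apply IH; auto.
Qed.

Lemma word_sum_eq_rel (rel : A -> A -> Prop) c :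
  (forall j a b, (j < k)%nat -> rel a b -> rel (act j a) (act j b)) ->
  (forall a b, rel a b -> c a = c b) ->
  forall n f a b, rel a b -> word_sum c n f a = word_sum c n f b.
Proof.
  intros Hact Hc n. induction n as [|n IH]; intros f a b Hr; simpl; auto.
  destruct f as [s|]; apply rsum_ext; intros j Hj; unfold drop_term;
    [destruct (s =? j)%nat; [lra|]|]; apply IH; auto.
Qed.

Definition bounded_cost (c : A -> R) : Prop := forall a, 0 <= c a <= 1.

Definition admissible (f : option nat) : Prop :=
  match f with None => True | Some s => (s < k)%nat end.

Hypothesis k_ge2 : (2 <= k)%nat.
Hypothesis inv_lt : forall j, (j < k)%nat -> (inv j < k)%nat.

Lemma INR_k_ge2 : 2 <= INR k.
Proof. apply (le_INR 2); exact k_ge2. Qed.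

Lemma word_sum_ge0 c : bounded_cost c -> forall n f a, 0 <= word_sum c n f a.
Proof.
  intros Hc n. induction n as [|n IH]; intros f a; simpl; [apply Hc|].
  rewrite <- (Rmult_0_r (INR k)), <- rsum_const.
  destruct f as [s|]; apply rsum_le; intros j _; [unfold drop_term; destruct (s =? j)%nat|];
    try lra; apply IH.
Qed.

Lemma word_sum_forbidden_le c : bounded_cost c ->
  forall n s a, (s < k)%nat -> word_sum c n (Some s) a <= (INR k - 1) ^ n.
Proof.
  pose proof INR_k_ge2. intros Hc n. induction n as [|n IH]; intros s a Hs; simpl; [apply Hc|].
  apply rsum_drop_term_le; [exact Hs| |apply pow_le; lra]. intros j Hj. apply IH, inv_lt, Hj.
Qed.

Lemma word_sum_le c : bounded_cost c ->
  forall n f a, admissible f -> word_sum c n f a <= INR k * (INR k - 1) ^ n.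
Proof.
  pose proof INR_k_ge2. intros Hc n f a Hf. assert (0 <= (INR k - 1) ^ n) by (apply pow_le; lra).
  destruct f as [s|].
  - pose proof (word_sum_forbidden_le c Hc n s a Hf). nra.
  - destruct n as [|n]; simpl.
    + pose proof (Hc a). lra.
    + apply Rle_trans with (INR k * (INR k - 1) ^ n).
      * apply rsum_bound. intros j Hj. apply word_sum_forbidden_le, inv_lt; auto.
      * assert (0 <= (INR k - 1) ^ n) by (apply pow_le; lra).
        apply Rmult_le_compat_l; [lra|]. simpl. nra.
Qed.

Variable q : R.
Hypothesis q_pos : 0 < q.
Hypothesis q_growth : q * (INR k - 1) < 1.

Lemma q_lt1 : q < 1.
Proof. pose proof INR_k_ge2. nra. Qed.

Lemma word_term_bound c : bounded_cost c -> forall n f a, admissible f ->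
  0 <= q ^ n * word_sum c n f a <= INR k * (q * (INR k - 1)) ^ n.
Proof.
  intros Hc n f a Hf. pose proof (word_sum_ge0 c Hc n f a). pose proof (word_sum_le c Hc n f a Hf).
  assert (0 <= q ^ n) by (apply pow_le; lra).
  rewrite Rpow_mult_distr. split; [apply Rmult_le_pos; lra|]. nra.
Qed.

Lemma word_series_summable c : bounded_cost c ->
  forall f a, admissible f -> ex_series (fun n => q ^ n * word_sum c n f a).
Proof.
  intros Hc f a Hf. apply (ex_series_geom_bound _ (INR k) (q * (INR k - 1))).
  - pose proof INR_k_ge2. split; [nra|lra].
  - intros n. apply word_term_bound; auto.
Qed.

Definition word_series (c : A -> R) (a : A) : R :=
  Series (fun n => q ^ n * word_sum c n None a).

Lemma word_series_ge_cost c : bounded_cost c -> forall a, c a <= word_series c a.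
Proof.
  intros Hc a. unfold word_series.
  pose proof (Series_ge_first (fun n => q ^ n * word_sum c n None a)) as H.
  simpl in H. rewrite Rmult_1_l in H. apply H.
  - intros n. apply word_term_bound; simpl; auto.
  - apply word_series_summable; simpl; auto.
Qed.

Lemma word_series_ge0 c : bounded_cost c -> forall a, 0 <= word_series c a.
Proof. intros Hc a. pose proof (Hc a). pose proof (word_series_ge_cost c Hc a). lra. Qed.

Lemma word_series_add_rel (rel : A -> A -> A -> Prop) c1 c2 c3 :
  bounded_cost c1 -> bounded_cost c2 ->
  (forall j a b g, (j < k)%nat -> rel a b g -> rel (act j a) (act j b) (act j g)) ->
  (forall a b g, rel a b g -> c1 a + c2 b = c3 g) ->
  forall a b g, rel a b g -> word_series c1 a + word_series c2 b = word_series c3 g.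
Proof.
  intros H1 H2 Hact Hc a b g Hr. unfold word_series.
  rewrite <- Series_plus by (apply word_series_summable; simpl; auto).
  apply Series_ext. intros n.
  rewrite <- (word_sum_add_rel rel c1 c2 c3 Hact Hc n None a b g Hr). ring.
Qed.

Lemma word_series_eq_rel (rel : A -> A -> Prop) c :
  (forall j a b, (j < k)%nat -> rel a b -> rel (act j a) (act j b)) ->
  (forall a b, rel a b -> c a = c b) ->
  forall a b, rel a b -> word_series c a = word_series c b.
Proof.
  intros Hact Hc a b Hr. apply Series_ext. intros n. f_equal. now apply (word_sum_eq_rel rel).
Qed.

(* Split the words according to whether their first letter is s. *)
Lemma word_series_split c s : bounded_cost c -> (s < k)%nat -> forall a,
  word_series c a =
  q * Series (fun n => q ^ n * word_sum c n (Some (inv s)) (act s a))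
  + Series (fun n => q ^ n * word_sum c n (Some s) a).
Proof.
  intros Hc Hs a.
  set (P := fun n => word_sum c n (Some (inv s)) (act s a)).
  set (Q := fun n => word_sum c n (Some s) a).
  change (fun n => q ^ n * word_sum c n (Some (inv s)) (act s a)) with (fun n => q ^ n * P n).
  change (fun n => q ^ n * word_sum c n (Some s) a) with (fun n => q ^ n * Q n).
  assert (exP : ex_series (fun n => q ^ n * P n)) by (apply word_series_summable; simpl; auto).
  assert (exQ : ex_series (fun n => q ^ n * Q n)) by (apply word_series_summable; simpl; auto).
  unfold word_series. rewrite Series_incr_1 by (apply word_series_summable; simpl; auto).
  rewrite (Series_incr_1 (fun n => q ^ n * Q n)) by auto.
  rewrite (Series_ext _ (fun n => q * (q ^ n * P n) + q ^ S n * Q (S n))).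
  2:{ intros n. simpl word_sum at 1. rewrite (rsum_drop_term _ _ s Hs). unfold P, Q. simpl. ring. }
  rewrite Series_plus, Series_scal_l.
  - simpl. unfold Q. simpl. ring.
  - apply (ex_series_scal_l q (fun n => q ^ n * P n)), exP.
  - now apply ex_series_incr_1 in exQ.
Qed.

(* The left-hand side is [SP + q SQ] and the right-hand side [(q SP + SQ) / q]. *)
Lemma word_series_act c s : bounded_cost c -> (s < k)%nat -> inv (inv s) = s ->
  (forall a, act (inv s) (act s a) = a) ->
  forall a, word_series c (act s a) <= / q * word_series c a.
Proof.
  intros Hc Hs Hii Hact a.
  rewrite (word_series_split c s Hc Hs a), (word_series_split c (inv s) Hc (inv_lt s Hs)).
  rewrite Hii, Hact.
  set (SP := Series (fun n => q ^ n * word_sum c n (Some (inv s)) (act s a))).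
  set (SQ := Series (fun n => q ^ n * word_sum c n (Some s) a)).
  assert (0 <= SQ) by (apply Series_ge0; [intros n; apply word_term_bound|
    apply word_series_summable]; simpl; auto).
  assert (q <= / q).
  { pose proof q_lt1. apply Rle_trans with 1; [lra|].
    rewrite <- Rinv_1. apply Rinv_le_contravar; lra. }
  rewrite Rmult_plus_distr_l, <- Rmult_assoc, Rinv_l by lra. nra.
Qed.

Section Continuity.

(* [near x d a] says that the datum [a] lies within [d] of the point [x]; the letters act
   continuously, [act j] following [move j]. *)
Variables (X : Type) (move : nat -> X -> X) (near : X -> R -> A -> Prop).
Hypothesis near_mono : forall x d1 d2 a, 0 < d1 <= d2 -> near x d1 a -> near x d2 a.
Hypothesis near_act : forall j x e, (j < k)%nat -> 0 < e ->
  exists d, 0 < d /\ forall a, near x d a -> near (move j x) e (act j a).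

Lemma word_sum_small c : (forall x e, 0 < e -> exists d, 0 < d /\ forall a, near x d a -> c a < e) ->
  forall n f x e, 0 < e -> exists d, 0 < d /\ forall a, near x d a -> word_sum c n f a < e.
Proof.
  pose proof INR_k_ge2. intros Hc n. induction n as [|n IH]; intros f x e He; [apply Hc; auto|].
  set (e' := e / (INR k + 1)). assert (He' : 0 < e') by (apply Rdiv_lt_0_compat; lra).
  destruct (common_delta k (fun j d => forall a, near x d a ->
      word_sum c n (Some (inv j)) (act j a) < e')) as [d [Hd Hall]].
  - intros j d1 d2 Hd12 HP a Ha. apply HP. eapply near_mono; eauto.
  - intros j Hj. destruct (IH (Some (inv j)) (move j x) e' He') as [d1 [Hd1 H1]].
    destruct (near_act j x d1 Hj Hd1) as [d2 [Hd2 H2]]. exists d2. auto.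
  - exists d. split; auto. intros a Ha.
    assert (Hsum : forall F, (forall j, (j < k)%nat -> F j <= e') -> rsum k F < e).
    { intros F HF. apply Rle_lt_trans with (INR k * e'); [now apply rsum_bound|].
      assert (INR k * e' + e' = e) by (unfold e'; field; lra). lra. }
    simpl. destruct f as [s|]; apply Hsum; intros j Hj;
      [unfold drop_term; destruct (s =? j)%nat; [lra|]|]; left; apply Hall; auto.
Qed.

Lemma word_series_small c : bounded_cost c ->
  (forall x e, 0 < e -> exists d, 0 < d /\ forall a, near x d a -> c a < e) ->
  forall x e, 0 < e -> exists d, 0 < d /\ forall a, near x d a -> word_series c a < e.
Proof.
  intros Hb Hc x e He. pose proof INR_k_ge2.
  destruct (Series_small_of_head (INR k) (q * (INR k - 1)) e) as [M [eta [Heta Hsmall]]];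
    [split; [nra|lra]|auto|].
  destruct (common_delta M (fun n d => forall a, near x d a -> word_sum c n None a < eta))
    as [d [Hd Hall]].
  - intros j d1 d2 Hd12 HP a Ha. apply HP. eapply near_mono; eauto.
  - intros n _. now apply word_sum_small.
  - exists d. split; auto. intros a Ha. apply Hsmall.
    + intros n. apply word_term_bound; simpl; auto.
    + intros n Hn. specialize (Hall n Hn a Ha). pose proof (word_sum_ge0 c Hb n None a).
      assert (0 <= q ^ n <= 1).
      { pose proof q_lt1. split; [apply pow_le; lra|rewrite <- (pow1 n); apply pow_incr; lra]. }
      nra.
Qed.

End Continuity.

End WordSeries.

Lemma continuity_pt_of_eps (f : R -> R) x0 :
  (forall e, 0 < e -> exists d, 0 < d /\ forall x, Rabs (x - x0) < d -> Rabs (f x - f x0) < e) ->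
  continuity_pt f x0.
Proof.
  intros H e He. destruct (H e He) as [d [Hd Hx]]. exists d. split; auto.
  intros x [_ Hxd]. apply Hx, Hxd.
Qed.

Definition clamp01 (t : R) : R := Rmax 0 (Rmin 1 t).

Lemma clamp01_range t : 0 <= clamp01 t <= 1.
Proof. unfold clamp01, Rmax, Rmin. repeat destruct Rle_dec; lra. Qed.

Lemma clamp01_id t : 0 <= t <= 1 -> clamp01 t = t.
Proof. intros. unfold clamp01, Rmax, Rmin. repeat destruct Rle_dec; lra. Qed.

Lemma clamp01_lipschitz t s : Rabs (clamp01 t - clamp01 s) <= Rabs (t - s).
Proof. unfold clamp01, Rmax, Rmin, Rabs. repeat destruct Rle_dec; repeat destruct Rcase_abs; lra. Qed.

Definition continuous_on_segment (f : R -> R) (a b : R) : Prop :=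
  forall t, a <= t <= b -> forall e, 0 < e -> exists d, 0 < d /\
    forall t', a <= t' <= b -> Rabs (t' - t) < d -> Rabs (f t' - f t) < e.

Definition injective_on_segment (f : R -> R) (a b : R) : Prop :=
  forall x y, a <= x <= b -> a <= y <= b -> f x = f y -> x = y.

(* The clamp makes the path from x to x' total, as [IVT_interv] asks for continuity at
   the endpoints in the two-sided sense. *)
Lemma continuity_pt_along_segment f a b x x' : continuous_on_segment f a b ->
  a <= x <= b -> a <= x' <= b -> forall t, continuity_pt (fun t => f (x + clamp01 t * (x' - x))) t.
Proof.
  intros Hf Hx Hx' t. set (X t := x + clamp01 t * (x' - x)).
  assert (HX : forall t, a <= X t <= b) by (intros s; pose proof (clamp01_range s); unfold X; nra).
  assert (HXlip : forall t s, Rabs (X t - X s) <= Rabs (x' - x) * Rabs (t - s)).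
  { intros s s'. unfold X. replace (x + clamp01 s * (x' - x) - (x + clamp01 s' * (x' - x)))
      with ((clamp01 s - clamp01 s') * (x' - x)) by ring.
    rewrite Rabs_mult, Rmult_comm. apply Rmult_le_compat_l; [apply Rabs_pos|apply clamp01_lipschitz]. }
  apply continuity_pt_of_eps. intros e He.
  destruct (Hf (X t) (HX t) e He) as [d [Hd Hd']].
  set (L := Rabs (x' - x) + 1). assert (HL : 0 < L) by (pose proof (Rabs_pos (x' - x)); unfold L; lra).
  exists (d / L). split; [apply Rdiv_lt_0_compat; auto|]. intros t' Ht'. apply Hd'; [apply HX|].
  apply Rle_lt_trans with (Rabs (x' - x) * Rabs (t' - t)); [apply HXlip|].
  apply Rle_lt_trans with (L * Rabs (t' - t)).
  - apply Rmult_le_compat_r; [apply Rabs_pos|unfold L; lra].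
  - apply Rmult_lt_reg_r with (/ L); [apply Rinv_0_lt_compat; lra|].
    rewrite Rmult_comm, <- Rmult_assoc, Rinv_l, Rmult_1_l by lra. exact Ht'.
Qed.

(* If f reversed one pair and preserved another, moving the first pair continuously onto
   the second would produce, by the intermediate value theorem, two distinct points with
   the same image. *)
Lemma injective_continuous_same_order f a b :
  continuous_on_segment f a b -> injective_on_segment f a b ->
  forall x y x' y', a <= x -> x < y -> y <= b -> a <= x' -> x' < y' -> y' <= b ->
  f x < f y -> f x' < f y'.
Proof.
  intros Hc Hinj x y x' y' H1 H2 H3 H4 H5 H6 Hf.
  destruct (Rtotal_order (f x') (f y')) as [Hl|[He|Hg]]; auto.
  - apply Hinj in He; lra.
  - exfalso.
    set (X t := x + clamp01 t * (x' - x)). set (Y t := y + clamp01 t * (y' - y)).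
    set (psi t := f (X t) - f (Y t)).
    destruct (IVT_interv psi 0 1) as [z [Hz Hpz]].
    + intros t _. apply (continuity_pt_minus (fun t => f (X t)) (fun t => f (Y t)));
        apply (continuity_pt_along_segment f a b _ _ Hc); lra.
    + lra.
    + unfold psi, X, Y. rewrite clamp01_id by lra. do 2 rewrite Rmult_0_l, Rplus_0_r. lra.
    + unfold psi, X, Y. rewrite clamp01_id by lra.
      replace (x + 1 * (x' - x)) with x' by ring. replace (y + 1 * (y' - y)) with y' by ring. lra.
    + assert (Hz01 := clamp01_id z Hz). unfold psi, X, Y in Hpz. rewrite Hz01 in Hpz.
      assert (E : x + z * (x' - x) = y + z * (y' - y)) by (apply Hinj; [nra|nra|lra]).
      destruct (Req_dec z 0) as [->|Hz0]; [lra|]. nra.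
Qed.

Lemma injective_continuous_monotone f a b : a < b ->
  continuous_on_segment f a b -> injective_on_segment f a b ->
  (forall x y, a <= x -> x < y -> y <= b -> f x < f y) \/
  (forall x y, a <= x -> x < y -> y <= b -> f y < f x).
Proof.
  intros Hab Hc Hinj. destruct (Rtotal_order (f a) (f b)) as [Hl|[He|Hg]].
  - left. intros x y Hx Hxy Hy. apply (injective_continuous_same_order f a b Hc Hinj a b); lra.
  - apply Hinj in He; lra.
  - right. intros x y Hx Hxy Hy.
    destruct (Rtotal_order (f y) (f x)) as [?|[He|?]]; auto.
    + apply Hinj in He; lra.
    + exfalso. assert (f a < f b); [|lra].
      apply (injective_continuous_same_order f a b Hc Hinj x y); lra.
Qed.

Lemma IVT_segment f a b v : a < b -> continuous_on_segment f a b ->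
  f a <= v <= f b -> exists t, a <= t <= b /\ f t = v.
Proof.
  intros Hab Hc [Ha Hb]. set (cl s := Rmax a (Rmin b s)).
  assert (Hcl : forall s, a <= s <= b -> cl s = s).
  { intros s Hs. unfold cl, Rmax, Rmin. repeat destruct Rle_dec; lra. }
  assert (Hcl_range : forall s, a <= cl s <= b) by (intros s; unfold cl, Rmax, Rmin; repeat destruct Rle_dec; lra).
  assert (Hcl_lip : forall s s', Rabs (cl s' - cl s) <= Rabs (s' - s)).
  { intros s s'. unfold cl, Rmax, Rmin, Rabs. repeat destruct Rle_dec; repeat destruct Rcase_abs; lra. }
  destruct (Req_dec (f a) v) as [Ea|Ea]; [exists a; split; [lra|auto]|].
  destruct (Req_dec (f b) v) as [Eb|Eb]; [exists b; split; [lra|auto]|].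
  destruct (IVT_interv (fun s => f (cl s) - v) a b) as [t [Ht Hft]]; rewrite ?Hcl by lra; try lra.
  - intros t _. apply continuity_pt_of_eps. intros e He.
    destruct (Hc (cl t) (Hcl_range t) e He) as [d [Hd Hd']]. exists d. split; auto.
    intros t' Ht'. replace (f (cl t') - v - (f (cl t) - v)) with (f (cl t') - f (cl t)) by ring.
    apply Hd'; [apply Hcl_range|]. eapply Rle_lt_trans; [apply Hcl_lip|exact Ht'].
  - exists t. rewrite Hcl in Hft by lra. split; [auto|lra].
Qed.

Lemma injective_continuous_monotone_open01 f :
  (forall a b, 0 < a -> b < 1 -> continuous_on_segment f a b) ->
  (forall x y, 0 < x < 1 -> 0 < y < 1 -> f x = f y -> x = y) ->
  (forall x y, 0 < x -> x < y -> y < 1 -> f x < f y) \/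
  (forall x y, 0 < x -> x < y -> y < 1 -> f y < f x).
Proof.
  intros Hc Hinj.
  assert (Hsame : forall x y x' y', 0 < x -> x < y -> y < 1 -> 0 < x' -> x' < y' -> y' < 1 ->
    f x < f y -> f x' < f y').
  { intros x y x' y' ? ? ? ? ? ? Hf.
    pose proof (Rmin_l x x'). pose proof (Rmin_r x x'). pose proof (Rmax_l y y'). pose proof (Rmax_r y y').
    set (a := Rmin x x') in *. set (b := Rmax y y') in *.
    assert (0 < a) by (apply Rmin_glb_lt; lra). assert (b < 1) by (apply Rmax_lub_lt; lra).
    assert (Hinj_ab : injective_on_segment f a b) by (intros u v Hu Hv; apply Hinj; lra).
    apply (injective_continuous_same_order f a b (Hc a b ltac:(lra) ltac:(lra)) Hinj_ab x y); lra. }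
  destruct (Rtotal_order (f (1/3)) (f (2/3))) as [Hlt|[Heq|Hgt]].
  - left. intros x y Hx Hxy Hy. apply (Hsame (1/3) (2/3)); lra.
  - apply Hinj in Heq; lra.
  - right. intros x y Hx Hxy Hy. destruct (Rtotal_order (f y) (f x)) as [?|[E|?]]; auto.
    + apply Hinj in E; lra.
    + assert (f (1/3) < f (2/3)); [apply (Hsame x y); lra|lra].
Qed.

Definition coord {M : Manifold1} (x : pt M) : R := proj1_sig x.

Lemma pt_eq M (x y : pt M) : coord x = coord y -> x = y.
Proof. destruct x, y; unfold coord; simpl. intros ->. f_equal. apply proof_irrelevance. Qed.

Lemma pt_range M (x : pt M) : 0 <= coord x <= 1.
Proof. destruct x as [v Hv]; destruct M; unfold coord; simpl in *; lra. Qed.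

Definition origin (M : Manifold1) : pt M :=
  exist _ 0 (match M return carrier_pred M 0 with
             | Circle => conj (Rle_refl 0) Rlt_0_1
             | Interval => conj (Rle_refl 0) Rle_0_1 end).

Lemma dist_ge0 M x y : 0 <= dist M x y.
Proof.
  pose proof (pt_range M x). pose proof (pt_range M y).
  destruct M; simpl; [destruct x as [a Ha], y as [b Hb]; simpl in *|apply Rabs_pos].
  apply Rmin_glb; unfold Rabs; destruct Rcase_abs; lra.
Qed.

Lemma dist_eq0 M x y : dist M x y = 0 -> x = y.
Proof.
  intros E. apply pt_eq. destruct M; simpl in E.
  - destruct x as [a Ha], y as [b Hb]; simpl in *. revert E. unfold Rmin, Rabs.
    repeat destruct Rcase_abs; destruct Rle_dec; lra.
  - apply Rminus_diag_uniq, Rabs_eq_0, E.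
Qed.

Lemma dist_pos M x y : x <> y -> 0 < dist M x y.
Proof.
  intros Hne. destruct (Rle_lt_or_eq_dec _ _ (dist_ge0 M x y)) as [H|H]; auto.
  exfalso. apply Hne, dist_eq0. now symmetry.
Qed.

Lemma dist_self M x : dist M x x = 0.
Proof. destruct M; simpl; rewrite Rminus_diag, Rabs_R0; [apply Rmin_left|]; lra. Qed.

Section ConjugatorOfMetric.

Variables (M : Manifold1) (h : pt M -> pt M) (rho : pt M -> pt M -> R) (Z : R).
Hypothesis Z_pos : 0 < Z.
Hypothesis h_surj : forall u, exists x, h x = u.
Hypothesis dist_h : forall x y, dist M (h x) (h y) = rho x y / Z.
Hypothesis rho_ge_dist : forall x y, dist M x y <= rho x y.
Hypothesis rho_small : forall x e, 0 < e ->
  exists d, 0 < d /\ forall y, dist M x y < d -> rho x y < e.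

Lemma dist_h_lt x y e : rho x y < e * Z -> dist M (h x) (h y) < e.
Proof.
  intros H. rewrite dist_h. apply Rmult_lt_reg_r with Z; auto.
  unfold Rdiv. rewrite Rmult_assoc, Rinv_l, Rmult_1_r by lra. exact H.
Qed.

Lemma rho_eq_dist_h x y : rho x y = Z * dist M (h x) (h y).
Proof. rewrite dist_h. field. lra. Qed.

Lemma conjugator_injective x y : h x = h y -> x = y.
Proof.
  intros E. apply dist_eq0. pose proof (dist_ge0 M x y). pose proof (rho_ge_dist x y).
  rewrite rho_eq_dist_h, E, dist_self in *. lra.
Qed.

Definition conjugator_inv (u : pt M) : pt M :=
  epsilon (inhabits (origin M)) (fun x => h x = u).

Lemma conjugator_inv_r u : h (conjugator_inv u) = u.
Proof. apply (epsilon_spec (inhabits (origin M)) (fun x => h x = u)), h_surj. Qed.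

Lemma conjugator_inv_l x : conjugator_inv (h x) = x.
Proof. apply conjugator_injective, conjugator_inv_r. Qed.

Lemma conjugator_homeo : is_homeo_with_inv M h conjugator_inv.
Proof.
  split; [split; [apply conjugator_inv_l|apply conjugator_inv_r]|split].
  - intros x e He. destruct (rho_small x (e * Z)) as [d [Hd Hd']]; [nra|].
    exists d. split; auto. intros y Hy. apply dist_h_lt, Hd', Hy.
  - intros u e He. exists (e / Z). split; [apply Rdiv_lt_0_compat; lra|].
    intros w Hw. eapply Rle_lt_trans; [apply rho_ge_dist|].
    rewrite rho_eq_dist_h, !conjugator_inv_r.
    apply Rmult_lt_reg_r with (/ Z); [apply Rinv_0_lt_compat; lra|].
    rewrite (Rmult_comm Z), Rmult_assoc, Rinv_r, Rmult_1_r by lra. exact Hw.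
Qed.

Lemma conjugate_lipschitz (g : pt M -> pt M) L :
  (forall x y, rho (g x) (g y) <= L * rho x y) ->
  lipschitz_with M L (fun x => h (g (conjugator_inv x))).
Proof.
  intros Hg x y.
  replace (dist M x y) with (dist M (h (conjugator_inv x)) (h (conjugator_inv y)))
    by now rewrite !conjugator_inv_r.
  rewrite !dist_h. unfold Rdiv. rewrite <- Rmult_assoc.
  apply Rmult_le_compat_r; [left; apply Rinv_0_lt_compat; lra|apply Hg].
Qed.

End ConjugatorOfMetric.

Definition embI (t : R) : pt Interval := exist _ (clamp01 t) (clamp01_range t).

Lemma coord_embI t : 0 <= t <= 1 -> coord (embI t) = t.
Proof. apply clamp01_id. Qed.

Lemma embI_coord x : embI (coord x) = x.
Proof. apply pt_eq. apply coord_embI, pt_range. Qed.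

Lemma distI x y : dist Interval x y = Rabs (coord x - coord y).
Proof. reflexivity. Qed.

Lemma dist_embI t s : dist Interval (embI t) (embI s) <= Rabs (t - s).
Proof. apply clamp01_lipschitz. Qed.

Lemma homeoI_monotone (g gi : pt Interval -> pt Interval) :
  inverse_of Interval g gi -> continuous_on Interval g ->
  (forall x y, coord x <= coord y -> coord (g x) <= coord (g y)) \/
  (forall x y, coord x <= coord y -> coord (g y) <= coord (g x)).
Proof.
  intros [Hl _] Hc. set (F t := coord (g (embI t))).
  assert (HgF : forall x, coord (g x) = F (coord x)) by (intros x; unfold F; now rewrite embI_coord).
  destruct (injective_continuous_monotone F 0 1) as [HF|HF]; [lra| | |left|right].
  - intros t Ht e He. destruct (Hc (embI t) e He) as [d [Hd Hd']]. exists d. split; auto.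
    intros t' Ht' Htd. specialize (Hd' (embI t')). rewrite !distI, !coord_embI in Hd' by auto.
    rewrite Rabs_minus_sym. apply Hd'. rewrite Rabs_minus_sym. exact Htd.
  - intros t s Ht Hs E. apply pt_eq in E.
    rewrite <- (coord_embI t), <- (coord_embI s), <- (Hl (embI t)), E, Hl by auto. reflexivity.
  - intros x y [Hxy|Exy]; [|apply pt_eq in Exy; subst; lra].
    rewrite !HgF. left. apply HF; try apply pt_range; lra.
  - intros x y [Hxy|Exy]; [|apply pt_eq in Exy; subst; lra].
    rewrite !HgF. left. apply HF; try apply pt_range; lra.
Qed.

Section IntervalCase.

Variables (k : nat) (g : nat -> pt Interval -> pt Interval) (inv : nat -> nat) (q : R).
Hypothesis k_ge2 : (2 <= k)%nat.
Hypothesis inv_lt : forall j, (j < k)%nat -> (inv j < k)%nat.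
Hypothesis inv_inv : forall j, (j < k)%nat -> inv (inv j) = j.
Hypothesis g_inverse : forall j, (j < k)%nat -> inverse_of Interval (g j) (g (inv j)).
Hypothesis g_cont : forall j, (j < k)%nat -> continuous_on Interval (g j).
Hypothesis q_pos : 0 < q.
Hypothesis q_growth : q * (INR k - 1) < 1.

Definition actI (j : nat) (p : pt Interval * pt Interval) := (g j (fst p), g j (snd p)).

Definition lengthI (p : pt Interval * pt Interval) : R := Rabs (coord (fst p) - coord (snd p)).

Definition word_distI (x y : pt Interval) : R := word_series _ k actI inv q lengthI (x, y).

Lemma lengthI_bounded : bounded_cost _ lengthI.
Proof.
  intros [x y]. unfold lengthI; simpl. pose proof (pt_range _ x). pose proof (pt_range _ y).
  split; [apply Rabs_pos|unfold Rabs; destruct Rcase_abs; lra].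
Qed.

Lemma word_distI_ge x y : dist Interval x y <= word_distI x y.
Proof. exact (word_series_ge_cost _ _ _ _ k_ge2 inv_lt _ q_pos q_growth _ lengthI_bounded (x, y)). Qed.

Lemma word_distI_ge0 x y : 0 <= word_distI x y.
Proof. exact (word_series_ge0 _ _ _ _ k_ge2 inv_lt _ q_pos q_growth _ lengthI_bounded (x, y)). Qed.

Lemma word_distI_sym x y : word_distI x y = word_distI y x.
Proof.
  apply (word_series_eq_rel _ _ _ _ _ (fun a b => b = (snd a, fst a))); [| |reflexivity].
  - intros j [a1 a2] b _ ->. reflexivity.
  - intros [a1 a2] b ->. apply Rabs_minus_sym.
Qed.

Definition betweenI (x y z : pt Interval) : Prop :=
  coord x <= coord y <= coord z \/ coord z <= coord y <= coord x.

Lemma betweenI_act j x y z : (j < k)%nat -> betweenI x y z -> betweenI (g j x) (g j y) (g j z).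
Proof.
  intros Hj Hb. destruct (homeoI_monotone (g j) (g (inv j)) (g_inverse j Hj) (g_cont j Hj)) as [Hm|Hm];
    destruct Hb as [[? ?]|[? ?]]; [left|right|right|left]; split; apply Hm; auto.
Qed.

Lemma word_distI_add x y z : betweenI x y z -> word_distI x y + word_distI y z = word_distI x z.
Proof.
  intros Hb.
  apply (word_series_add_rel _ _ _ _ k_ge2 inv_lt _ q_pos q_growth
    (fun a b c => exists x y z, a = (x, y) /\ b = (y, z) /\ c = (x, z) /\ betweenI x y z)
    _ _ _ lengthI_bounded lengthI_bounded).
  - intros j a b c Hj (x0 & y0 & z0 & -> & -> & -> & H).
    exists (g j x0), (g j y0), (g j z0). repeat split. now apply betweenI_act.
  - intros a b c (x0 & y0 & z0 & -> & -> & -> & H). unfold lengthI; simpl.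
    destruct H as [[? ?]|[? ?]]; unfold Rabs; repeat destruct Rcase_abs; lra.
  - exists x, y, z. auto.
Qed.

Lemma word_distI_act j x y : (j < k)%nat -> word_distI (g j x) (g j y) <= / q * word_distI x y.
Proof.
  intros Hj. destruct (g_inverse j Hj) as [Hl _].
  assert (Hback : forall p, actI (inv j) (actI j p) = p) by (intros [a b]; unfold actI; simpl; now rewrite !Hl).
  exact (word_series_act _ _ actI _ k_ge2 inv_lt _ q_pos q_growth _ j lengthI_bounded Hj
    (inv_inv j Hj) Hback (x, y)).
Qed.

Lemma word_distI_small x e : 0 < e -> exists d, 0 < d /\
  forall u w, dist Interval x u < d -> dist Interval x w < d -> word_distI u w < e.
Proof.
  intros He.
  destruct (word_series_small _ _ actI _ k_ge2 inv_lt _ q_pos q_growth _ g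
    (fun x d p => dist Interval x (fst p) < d /\ dist Interval x (snd p) < d))
    with (c := lengthI) (x := x) (e := e) as [d [Hd Hd']]; auto.
  - intros x0 d1 d2 a Hd12 [H1 H2]; split; lra.
  - intros j x0 e0 Hj He0. destruct (g_cont j Hj x0 e0 He0) as [d [Hd Hd']].
    exists d. split; auto. intros [u w] [H1 H2]. split; apply Hd'; auto.
  - apply lengthI_bounded.
  - intros x0 e0 He0. exists (e0 / 2). split; [lra|]. intros [u w] [H1 H2]; cbn [fst snd] in *.
    unfold lengthI; simpl. rewrite distI in H1, H2.
    replace (coord u - coord w) with ((coord x0 - coord w) - (coord x0 - coord u)) by ring.
    eapply Rle_lt_trans; [apply Rabs_triang|]. rewrite Rabs_Ropp. lra.
  - exists d. split; auto. intros u w H1 H2. apply (Hd' (u, w)). split; auto.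
Qed.

Definition scaleI : R := word_distI (embI 0) (embI 1).

Definition posI (x : pt Interval) : R := word_distI (embI 0) x / scaleI.

Definition conjI (x : pt Interval) : pt Interval := embI (posI x).

Lemma scaleI_ge1 : 1 <= scaleI.
Proof.
  pose proof (word_distI_ge (embI 0) (embI 1)). rewrite distI, !coord_embI in H by lra.
  unfold scaleI. replace (Rabs (0 - 1)) with 1 in H; [lra|].
  rewrite Rabs_minus_sym, Rminus_0_r. symmetry. apply Rabs_pos_eq. lra.
Qed.

Lemma posI_sub x y : coord x <= coord y -> posI y - posI x = word_distI x y / scaleI.
Proof.
  intros Hxy. pose proof scaleI_ge1. unfold posI. rewrite <- (word_distI_add (embI 0) x y); [field; lra|].
  left. rewrite coord_embI by lra. split; [apply pt_range|auto].
Qed.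

Lemma posI_range x : 0 <= posI x <= 1.
Proof.
  pose proof scaleI_ge1. pose proof (word_distI_ge0 (embI 0) x). pose proof (word_distI_ge0 x (embI 1)).
  assert (word_distI (embI 0) x + word_distI x (embI 1) = scaleI).
  { apply word_distI_add. left. rewrite !coord_embI by lra. apply pt_range. }
  unfold posI. split; [apply Rdiv_le_0_compat; lra|].
  apply Rmult_le_reg_r with scaleI; [lra|]. unfold Rdiv. rewrite Rmult_assoc, Rinv_l by lra. lra.
Qed.

Lemma coord_conjI x : coord (conjI x) = posI x.
Proof. apply coord_embI, posI_range. Qed.

Lemma dist_conjI x y : dist Interval (conjI x) (conjI y) = word_distI x y / scaleI.
Proof.
  pose proof scaleI_ge1. rewrite distI, !coord_conjI.
  destruct (Rle_dec (coord x) (coord y)).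
  - rewrite Rabs_minus_sym, posI_sub by auto.
    apply Rabs_pos_eq, Rdiv_le_0_compat; [apply word_distI_ge0|lra].
  - rewrite posI_sub, word_distI_sym by lra.
    apply Rabs_pos_eq, Rdiv_le_0_compat; [apply word_distI_ge0|lra].
Qed.

Lemma conjI_surjective u : exists x, conjI x = u.
Proof.
  pose proof scaleI_ge1. set (F t := posI (embI t)).
  assert (Hcont : continuous_on_segment F 0 1).
  { intros t Ht e He.
    destruct (word_distI_small (embI t) (e * scaleI)) as [d [Hd Hd']]; [nra|].
    exists d. split; auto. intros t' Ht' Htd. unfold F. rewrite <- !coord_conjI, <- distI, dist_conjI.
    apply Rmult_lt_reg_r with scaleI; [lra|].
    unfold Rdiv. rewrite Rmult_assoc, Rinv_l, Rmult_1_r by lra. apply Hd'.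
    - eapply Rle_lt_trans; [apply dist_embI|]. now rewrite Rabs_minus_sym.
    - rewrite dist_self. exact Hd. }
  assert (Hends : F 0 <= coord u <= F 1).
  { unfold F, posI. pose proof (pt_range _ u). fold scaleI. rewrite Rdiv_diag by lra.
    assert (betweenI (embI 0) (embI 0) (embI 0)) by (left; rewrite coord_embI; lra).
    pose proof (word_distI_add _ _ _ H1). unfold Rdiv. nra. }
  destruct (IVT_segment F 0 1 (coord u) ltac:(lra) Hcont Hends) as [t [Ht Ft]].
  exists (embI t). apply pt_eq. rewrite coord_conjI. exact Ft.
Qed.

Theorem interval_case :
  exists h hinv, is_homeo_with_inv Interval h hinv /\
    forall j, (j < k)%nat -> lipschitz_with Interval (/ q) (fun x => h (g j (hinv x))).
Proof.
  pose proof scaleI_ge1.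
  assert (Hsmall : forall x e, 0 < e ->
    exists d, 0 < d /\ forall y, dist Interval x y < d -> word_distI x y < e).
  { intros x e He. destruct (word_distI_small x e He) as [d [Hd Hd']].
    exists d. split; auto. intros y Hy. apply Hd'; auto. now rewrite dist_self. }
  exists conjI, (conjugator_inv _ conjI).
  split; [apply (conjugator_homeo _ _ word_distI scaleI)|intros j Hj;
    apply (conjugate_lipschitz _ _ word_distI scaleI)]; auto using conjI_surjective,
    dist_conjI, word_distI_ge, word_distI_act; lra.
Qed.

End IntervalCase.

Notation coordC := (@coord Circle).

(* [arcR a b] is the length of the counterclockwise arc from [a] to [b] on R/Z, for
   [a b] in [0,1); [cyclicR a b c] says that [a], [b], [c] come in counterclockwise order. *)
Definition arcR (a b : R) : R := if Rle_dec a b then b - a else b - a + 1.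

Definition in01 (a : R) : Prop := 0 <= a < 1.

Ltac arc_cases := unfold arcR in *; repeat match goal with
  | |- context [Rle_dec ?a ?b] => destruct (Rle_dec a b)
  | H : context [Rle_dec ?a ?b] |- _ => destruct (Rle_dec a b) end.

Lemma arcR_range a b : in01 a -> in01 b -> 0 <= arcR a b < 1.
Proof. unfold in01; intros; arc_cases; lra. Qed.

Lemma arcR_diag a : arcR a a = 0.
Proof. arc_cases; lra. Qed.

Lemma arcR_compl a b : a <> b -> arcR a b + arcR b a = 1.
Proof. intros; arc_cases; lra. Qed.

Lemma arcR_pos a b : a <> b -> in01 a -> in01 b -> 0 < arcR a b.
Proof. unfold in01; intros; arc_cases; lra. Qed.

Lemma distC_arcR a b : in01 a -> in01 b ->
  Rmin (Rabs (a - b)) (1 - Rabs (a - b)) = Rmin (arcR a b) (arcR b a).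
Proof.
  unfold in01; intros. unfold Rmin, Rabs. arc_cases;
  repeat match goal with |- context [Rcase_abs ?x] => destruct (Rcase_abs x) end;
  repeat match goal with |- context [Rle_dec ?a ?b] => destruct (Rle_dec a b) end; lra.
Qed.

Lemma arcR_shift a b a' b' : in01 a -> in01 b -> in01 a' -> in01 b' ->
  ((b - a) - (b' - a') = 0 \/ (b - a) - (b' - a') = 1 \/ (b - a) - (b' - a') = -1) ->
  arcR a b = arcR a' b'.
Proof. unfold in01; intros; arc_cases; lra. Qed.

Definition cyclicR (a b c : R) : Prop := arcR a b <= arcR a c.

Lemma cyclicR_arc_add a b c : in01 a -> in01 b -> in01 c ->
  cyclicR a b c -> arcR a b + arcR b c = arcR a c.
Proof. unfold in01, cyclicR; intros; arc_cases; lra. Qed.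

Lemma cyclicR_incr (F : R -> R) :
  (forall x y, in01 x -> in01 y -> x < y -> F x < F y) ->
  (forall x, in01 x -> in01 (F x)) ->
  forall a b c, in01 a -> in01 b -> in01 c -> cyclicR a b c -> cyclicR (F a) (F b) (F c).
Proof.
  intros HF HR a b c Ha Hb Hc H.
  pose proof (HR a Ha). pose proof (HR b Hb). pose proof (HR c Hc). unfold in01 in *.
  assert (Hm : forall x y, in01 x -> in01 y ->
    (x < y -> F x < F y) /\ (x = y -> F x = F y) /\ (y < x -> F y < F x)).
  { intros x y Hx Hy. split; [|split]; intros; subst; auto. }
  destruct (Hm a b Ha Hb) as [Hab1 [Hab2 Hab3]].
  destruct (Hm a c Ha Hc) as [Hac1 [Hac2 Hac3]].
  destruct (Hm b c Hb Hc) as [Hbc1 [Hbc2 Hbc3]].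
  unfold cyclicR in *.
  destruct (Rtotal_order a b) as [?|[?|?]];
  destruct (Rtotal_order a c) as [?|[?|?]];
  destruct (Rtotal_order b c) as [?|[?|?]];
  repeat match goal with | H : ?P, H' : ?P -> ?Q |- _ => specialize (H' H) end;
  arc_cases; lra.
Qed.

Definition reflect01 (t : R) : R := if Rle_dec t 0 then 0 else 1 - t.

Lemma cyclicR_reflect a b c : in01 a -> in01 b -> in01 c ->
  cyclicR a b c -> cyclicR (reflect01 c) (reflect01 b) (reflect01 a).
Proof. unfold in01, cyclicR, reflect01; intros. arc_cases; lra. Qed.

Lemma cyclicR_incr_fix0 (F : R -> R) :
  F 0 = 0 -> (forall x, 0 < x < 1 -> 0 < F x < 1) ->
  (forall x y, 0 < x -> x < y -> y < 1 -> F x < F y) ->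
  forall a b c, in01 a -> in01 b -> in01 c -> cyclicR a b c -> cyclicR (F a) (F b) (F c).
Proof.
  intros H0 H1 H2. apply cyclicR_incr.
  - unfold in01. intros x y Hx Hy Hxy. destruct (Req_dec x 0) as [->|].
    + rewrite H0. apply H1; lra.
    + apply H2; lra.
  - unfold in01. intros x Hx. destruct (Req_dec x 0) as [->|]. rewrite H0; lra.
    pose proof (H1 x ltac:(lra)); lra.
Qed.

Lemma cyclicR_decr_fix0 (F : R -> R) :
  F 0 = 0 -> (forall x, 0 < x < 1 -> 0 < F x < 1) ->
  (forall x y, 0 < x -> x < y -> y < 1 -> F y < F x) ->
  forall a b c, in01 a -> in01 b -> in01 c -> cyclicR a b c -> cyclicR (F c) (F b) (F a).
Proof.
  intros H0 H1 H2 a b c Ha Hb Hc H.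
  assert (HR : forall t, in01 t -> in01 (reflect01 t)) by (unfold in01, reflect01; intros; destruct Rle_dec; lra).
  assert (HRR : forall t, in01 t -> reflect01 (reflect01 t) = t).
  { unfold in01, reflect01; intros. repeat destruct Rle_dec; lra. }
  assert (E : forall t, in01 t -> F t = F (reflect01 (reflect01 t))) by (intros; rewrite HRR; auto).
  rewrite (E a), (E b), (E c) by auto.
  apply (cyclicR_incr_fix0 (fun t => F (reflect01 t))); auto.
  - unfold reflect01. destruct Rle_dec; [auto|lra].
  - intros x Hx. unfold reflect01. destruct Rle_dec; [lra|]. apply H1; lra.
  - intros x y Hx Hxy Hy. unfold reflect01. repeat destruct Rle_dec; try lra. apply H2; lra.
  - apply cyclicR_reflect; auto.
Qed.

Lemma coordC_range (x : pt Circle) : in01 (coordC x).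
Proof. destruct x; simpl; auto. Qed.

(* Reduction modulo 1, correct on [0,2); the value outside is irrelevant. *)
Definition wrap01 (s : R) : R :=
  if Rlt_dec s 1 then (if Rle_dec 0 s then s else 0)
  else (if Rlt_dec (s - 1) 1 then (if Rle_dec 0 (s - 1) then s - 1 else 0) else 0).

Lemma wrap01_range s : 0 <= wrap01 s < 1.
Proof. unfold wrap01. repeat destruct Rlt_dec; repeat destruct Rle_dec; lra. Qed.

Definition embC (s : R) : pt Circle := exist _ (wrap01 s) (wrap01_range s).

Lemma coord_embC s : coordC (embC s) = wrap01 s.
Proof. reflexivity. Qed.

Lemma wrap01_id s : 0 <= s < 1 -> wrap01 s = s.
Proof. intros; unfold wrap01. repeat destruct Rlt_dec; repeat destruct Rle_dec; lra. Qed.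

Lemma wrap01_sub1 s : 1 <= s < 2 -> wrap01 s = s - 1.
Proof. intros; unfold wrap01. repeat destruct Rlt_dec; repeat destruct Rle_dec; lra. Qed.

Lemma wrap01_cases s : 0 <= s < 2 -> wrap01 s = s \/ wrap01 s = s - 1.
Proof. intros; unfold wrap01. repeat destruct Rlt_dec; repeat destruct Rle_dec; lra. Qed.

Definition arc (x y : pt Circle) : R := arcR (coordC x) (coordC y).

Definition cyclic (x y z : pt Circle) : Prop := cyclicR (coordC x) (coordC y) (coordC z).

Lemma distC x y : dist Circle x y = Rmin (arc x y) (arc y x).
Proof. unfold arc. rewrite <- distC_arcR by apply coordC_range. reflexivity. Qed.

Lemma distC_abs x y :
  dist Circle x y = Rmin (Rabs (coordC x - coordC y)) (1 - Rabs (coordC x - coordC y)).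
Proof. reflexivity. Qed.

Lemma distC_sym x y : dist Circle x y = dist Circle y x.
Proof. rewrite !distC. apply Rmin_comm. Qed.

Lemma distC_tri x y z : dist Circle x z <= dist Circle x y + dist Circle y z.
Proof.
  rewrite !distC_abs. pose proof (coordC_range x). pose proof (coordC_range y). pose proof (coordC_range z).
  unfold in01 in *. set (a := coordC x) in *. set (b := coordC y) in *. set (c := coordC z) in *.
  unfold Rmin, Rabs.
  repeat match goal with |- context [Rcase_abs ?x] => destruct (Rcase_abs x) end;
  repeat match goal with |- context [Rle_dec ?a ?b] => destruct (Rle_dec a b) end; lra.
Qed.

Lemma arc_compl x y : x <> y -> arc x y + arc y x = 1.
Proof. intros H. apply arcR_compl. intros E; apply H, pt_eq, E. Qed.

Lemma arc_range x y : 0 <= arc x y < 1.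
Proof. apply arcR_range; apply coordC_range. Qed.

Lemma cyclic_arc_add x y z : cyclic x y z -> arc x y + arc y z = arc x z.
Proof. apply cyclicR_arc_add; apply coordC_range. Qed.

Lemma cyclic_antisym x y z : x <> y -> y <> z -> x <> z -> cyclic x y z -> cyclic z y x -> False.
Proof.
  intros H1 H2 H3 C1 C2. apply cyclic_arc_add in C1. apply cyclic_arc_add in C2.
  pose proof (arc_compl _ _ H1). pose proof (arc_compl _ _ H2). pose proof (arc_compl _ _ H3). lra.
Qed.

Lemma arc_diag x : arc x x = 0.
Proof. apply arcR_diag. Qed.

Lemma arc_le_compl_dist x y : arc x y <= 1 - dist Circle x y /\ arc y x <= 1 - dist Circle x y.
Proof.
  rewrite distC. destruct (classic (x = y)) as [->|Hne].
  - rewrite arc_diag. unfold Rmin. destruct Rle_dec; lra.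
  - pose proof (arc_compl x y Hne). unfold Rmin. destruct Rle_dec; lra.
Qed.

Lemma arc_lt_of_dist x y e : dist Circle x y < e -> arc x y <= 1 - e -> arc x y < e.
Proof.
  intros Hd Harc. rewrite distC in Hd. destruct (classic (x = y)) as [->|Hne].
  - rewrite arc_diag. unfold Rmin in Hd. rewrite arc_diag in Hd. destruct Rle_dec; lra.
  - pose proof (arc_compl x y Hne). unfold Rmin in Hd. destruct Rle_dec; lra.
Qed.

Lemma circle_dist_le_of_congruent a b s s' : in01 a -> in01 b ->
  ((a - b) - (s - s') = 0 \/ (a - b) - (s - s') = 1 \/ (a - b) - (s - s') = -1) ->
  Rmin (Rabs (a - b)) (1 - Rabs (a - b)) <= Rabs (s - s').
Proof.
  unfold in01; intros Ha Hb H. unfold Rmin, Rabs.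
  repeat match goal with |- context [Rcase_abs ?x] => destruct (Rcase_abs x) end;
  repeat match goal with |- context [Rle_dec ?a ?b] => destruct (Rle_dec a b) end; lra.
Qed.

Lemma dist_embC s s' : 0 <= s < 2 -> 0 <= s' < 2 -> dist Circle (embC s) (embC s') <= Rabs (s - s').
Proof.
  intros Hs Hs'. rewrite distC_abs. rewrite !coord_embC. apply circle_dist_le_of_congruent; try apply wrap01_range.
  destruct (wrap01_cases s Hs) as [-> | ->]; destruct (wrap01_cases s' Hs') as [-> | ->]; lra.
Qed.

Lemma abs_lt_of_circle_dist_lt A B m : in01 A -> in01 B -> 0 < m -> m <= A -> m <= 1 - A ->
  Rmin (Rabs (A - B)) (1 - Rabs (A - B)) < m -> Rabs (A - B) < m.
Proof.
  unfold in01; intros. unfold Rmin, Rabs in *.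
  repeat match goal with H : context [Rcase_abs ?x] |- _ => destruct (Rcase_abs x) end;
  repeat match goal with |- context [Rcase_abs ?x] => destruct (Rcase_abs x) end;
  repeat match goal with H : context [Rle_dec ?a ?b] |- _ => destruct (Rle_dec a b) end; lra.
Qed.

Definition preserves_cyclic (g : pt Circle -> pt Circle) : Prop :=
  forall x y z, cyclic x y z -> cyclic (g x) (g y) (g z).

Definition reverses_cyclic (g : pt Circle -> pt Circle) : Prop :=
  forall x y z, cyclic x y z -> cyclic (g z) (g y) (g x).

Definition cut (p x : pt Circle) : R := arcR (coordC p) (coordC x).

Definition uncut (p : pt Circle) (t : R) : pt Circle := embC (coordC p + t).

Lemma cut_range p x : in01 (cut p x).
Proof. apply arcR_range; apply coordC_range. Qed.

Lemma uncut_cut p x : uncut p (cut p x) = x.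
Proof.
  apply pt_eq. unfold uncut, cut. rewrite coord_embC.
  pose proof (coordC_range p). pose proof (coordC_range x). unfold in01, arcR in *.
  destruct Rle_dec; [rewrite wrap01_id|rewrite wrap01_sub1]; lra.
Qed.

Lemma cut_uncut p t : in01 t -> cut p (uncut p t) = t.
Proof.
  intros Ht. pose proof (coordC_range p). unfold in01 in *. unfold cut, uncut. rewrite coord_embC.
  unfold arcR. destruct (Rlt_dec (coordC p + t) 1);
    [rewrite wrap01_id|rewrite wrap01_sub1]; try lra; destruct Rle_dec; lra.
Qed.

Lemma cyclic_cut p x y z : cyclic x y z <-> cyclicR (cut p x) (cut p y) (cut p z).
Proof.
  unfold cyclic, cyclicR, cut.
  pose proof (coordC_range p). pose proof (coordC_range x). pose proof (coordC_range y).
  pose proof (coordC_range z).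
  assert (Hshift : forall u, in01 u ->
    arcR (coordC x) u = arcR (arcR (coordC p) (coordC x)) (arcR (coordC p) u)).
  { intros u Hu. apply arcR_shift; auto; try apply arcR_range; auto. unfold in01 in *. arc_cases; lra. }
  rewrite <- !Hshift by auto. tauto.
Qed.

Lemma chart_continuous (g : pt Circle -> pt Circle) p a b :
  continuous_on Circle g -> 0 <= a -> b < 1 ->
  (forall t, a <= t <= b -> 0 < coordC (g (uncut p t)) < 1) ->
  continuous_on_segment (fun t => coordC (g (uncut p t))) a b.
Proof.
  intros Hc Ha Hb Hin t Ht e He. set (Phi t := coordC (g (uncut p t))). fold (Phi t).
  pose proof (Hin t Ht) as HPt. fold (Phi t) in HPt.
  set (m := Rmin e (Rmin (Phi t) (1 - Phi t))).
  assert (Hm : 0 < m) by (unfold m; repeat apply Rmin_glb_lt; lra).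
  assert (Hm1 : m <= e) by apply Rmin_l.
  assert (Hm2 : m <= Phi t) by (unfold m; eapply Rle_trans; [apply Rmin_r|apply Rmin_l]).
  assert (Hm3 : m <= 1 - Phi t) by (unfold m; eapply Rle_trans; [apply Rmin_r|apply Rmin_r]).
  destruct (Hc (uncut p t) m Hm) as [d [Hd Hd']].
  exists d. split; auto. intros t' Ht' Htd. fold (Phi t').
  assert (dist Circle (uncut p t) (uncut p t') < d).
  { pose proof (coordC_range p). unfold in01 in *. eapply Rle_lt_trans; [apply dist_embC; lra|].
    rewrite Rabs_minus_sym. replace (coordC p + t' - (coordC p + t)) with (t' - t) by ring. auto. }
  specialize (Hd' _ H). rewrite distC_abs in Hd'. fold (Phi t) (Phi t') in Hd'.
  rewrite Rabs_minus_sym. apply Rlt_le_trans with m; [|lra].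
  apply abs_lt_of_circle_dist_lt; auto; try apply coordC_range; lra.
Qed.

(* Cutting the circle at the preimage of 0 turns g into an injective continuous map of
   (0,1) into itself, which is monotone. *)
Lemma homeoC_orientation (g gi : pt Circle -> pt Circle) :
  inverse_of Circle g gi -> continuous_on Circle g ->
  preserves_cyclic g \/ reverses_cyclic g.
Proof.
  intros [Hl Hr] Hc. set (p := gi (embC 0)). set (Phi t := coordC (g (uncut p t))).
  assert (HgPhi : forall x, coordC (g x) = Phi (cut p x)) by (intros; unfold Phi; now rewrite uncut_cut).
  assert (HPhi0 : Phi 0 = 0).
  { unfold Phi, uncut. rewrite Rplus_0_r.
    replace (embC (coordC p)) with p
      by (apply pt_eq; rewrite coord_embC, wrap01_id; [reflexivity|apply coordC_range]).
    unfold p. rewrite Hr, coord_embC, wrap01_id; lra. }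
  assert (HPhi_inj : forall t t', in01 t -> in01 t' -> Phi t = Phi t' -> t = t').
  { intros t t' Ht Ht' E. apply pt_eq in E.
    rewrite <- (cut_uncut p t), <- (cut_uncut p t'), <- (Hl (uncut p t)), E, Hl by auto. reflexivity. }
  assert (HPhi_pos : forall t, 0 < t < 1 -> 0 < Phi t < 1).
  { intros t Ht. pose proof (coordC_range (g (uncut p t))). fold (Phi t) in H. unfold in01 in H.
    split; [|lra]. destruct (Req_dec (Phi t) 0) as [E|E]; [|lra].
    rewrite <- HPhi0 in E. apply HPhi_inj in E; unfold in01; lra. }
  destruct (injective_continuous_monotone_open01 Phi) as [Hm|Hm].
  - intros a b Ha Hb. apply chart_continuous; auto; [lra|]. intros t Ht. apply HPhi_pos. lra.
  - intros x y Hx Hy. apply HPhi_inj; unfold in01; lra.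
  - left. intros x y z Hxyz. apply (cyclic_cut p) in Hxyz. unfold cyclic. rewrite !HgPhi.
    apply cyclicR_incr_fix0; auto using cut_range.
  - right. intros x y z Hxyz. apply (cyclic_cut p) in Hxyz. unfold cyclic. rewrite !HgPhi.
    apply cyclicR_decr_fix0; auto using cut_range.
Qed.

Lemma cyclic_triple_exists : exists x y z, x <> y /\ y <> z /\ x <> z /\ cyclic x y z.
Proof.
  exists (embC 0), (embC (1/3)), (embC (2/3)).
  assert (E0 : coordC (embC 0) = 0) by (rewrite coord_embC; apply wrap01_id; lra).
  assert (E1 : coordC (embC (1/3)) = 1/3) by (rewrite coord_embC; apply wrap01_id; lra).
  assert (E2 : coordC (embC (2/3)) = 2/3) by (rewrite coord_embC; apply wrap01_id; lra).
  split; [|split; [|split]].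
  - intros E. apply (f_equal coordC) in E. lra.
  - intros E. apply (f_equal coordC) in E. lra.
  - intros E. apply (f_equal coordC) in E. lra.
  - unfold cyclic, cyclicR. rewrite E0, E1, E2. arc_cases; lra.
Qed.

Lemma not_preserves_reverses g :
  (forall x y, g x = g y -> x = y) -> preserves_cyclic g -> reverses_cyclic g -> False.
Proof.
  intros Hi Hp Hr. destruct cyclic_triple_exists as [x [y [z [H1 [H2 [H3 H]]]]]].
  apply (cyclic_antisym (g x) (g y) (g z)); try (intros E; apply Hi in E); auto.
Qed.

Lemma preserves_cyclic_inverse g gi :
  inverse_of Circle g gi -> continuous_on Circle g -> continuous_on Circle gi ->
  (preserves_cyclic g <-> preserves_cyclic gi).
Proof.
  intros Hinv Hc Hci. assert (Hinv' : inverse_of Circle gi g) by (destruct Hinv; split; auto).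
  destruct Hinv as [Hl Hr].
  destruct cyclic_triple_exists as [x [y [z [H1 [H2 [H3 H]]]]]].
  destruct (homeoC_orientation g gi (conj Hl Hr) Hc) as [Pg|Rg];
  destruct (homeoC_orientation gi g Hinv' Hci) as [Pgi|Rgi]; split; intros; auto.
  - exfalso. apply (cyclic_antisym x y z); auto. specialize (Rgi x y z H). apply Pg in Rgi.
    rewrite !Hr in Rgi. auto.
  - exfalso. apply (cyclic_antisym x y z); auto. specialize (Pgi x y z H). apply Rg in Pgi.
    rewrite !Hr in Pgi. auto.
  - exfalso. apply (not_preserves_reverses g); auto. intros a b E. rewrite <- (Hl a), <- (Hl b), E; auto.
  - exfalso. apply (not_preserves_reverses gi); auto. intros a b E. rewrite <- (Hr a), <- (Hr b), E; auto.
Qed.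

(* With z antipodal to x, the short arc from u to w avoids z, so its image is the arc
   between g u and g w avoiding g z, which is short because g u, g w are close to g x
   and far from g z. *)
Lemma arc_image_small (g gi : pt Circle -> pt Circle) :
  inverse_of Circle g gi -> continuous_on Circle g ->
  forall x e, 0 < e -> exists d, 0 < d /\ forall u w,
    dist Circle x u < d -> dist Circle x w < d -> arc u w < d ->
    dist Circle (g x) (g u) < e /\ dist Circle (g x) (g w) < e /\
    (preserves_cyclic g -> arc (g u) (g w) < e) /\ (reverses_cyclic g -> arc (g w) (g u) < e).
Proof.
  intros [Hl Hr] Hc x e He. pose proof (coordC_range x) as Hx. unfold in01 in Hx.
  set (z := embC (coordC x + 1/2)).
  assert (Hxz : dist Circle x z = 1/2).
  { rewrite distC_abs. unfold z. rewrite coord_embC.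
    destruct (Rlt_dec (coordC x + 1/2) 1); [rewrite wrap01_id by lra|rewrite wrap01_sub1 by lra];
      unfold Rmin, Rabs; repeat destruct Rcase_abs; destruct Rle_dec; lra. }
  assert (Hgxz : g x <> g z).
  { intros E. assert (Exz : x = z) by (rewrite <- (Hl x), E; auto).
    rewrite <- Exz, dist_self in Hxz. lra. }
  set (d0 := dist Circle (g x) (g z)). assert (Hd0 : 0 < d0) by now apply dist_pos.
  set (eta := Rmin e d0 / 3).
  assert (Heta : 0 < eta) by (unfold eta; apply Rdiv_lt_0_compat; [apply Rmin_glb_lt|]; lra).
  assert (Heta1 : eta <= e / 3) by (unfold eta; pose proof (Rmin_l e d0); lra).
  assert (Heta2 : eta <= d0 / 3) by (unfold eta; pose proof (Rmin_r e d0); lra).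
  destruct (Hc x eta Heta) as [d1 [Hd1 Hd1']].
  exists (Rmin d1 (1/8)). split; [apply Rmin_glb_lt; lra|]. intros u w Hu Hw Huw.
  pose proof (Rmin_l d1 (1/8)). pose proof (Rmin_r d1 (1/8)).
  assert (Hgu : dist Circle (g x) (g u) < eta) by (apply Hd1'; lra).
  assert (Hgw : dist Circle (g x) (g w) < eta) by (apply Hd1'; lra).
  assert (Huwz : cyclic u w z).
  { change (arc u w <= arc u z). assert (dist Circle u z <= arc u z) by (rewrite distC; apply Rmin_l).
    pose proof (distC_tri x u z). lra. }
  assert (Hguw : dist Circle (g u) (g w) < 2 * eta).
  { pose proof (distC_tri (g u) (g x) (g w)). rewrite (distC_sym (g u) (g x)) in H1. lra. }
  assert (Hguz : 2 * eta <= dist Circle (g u) (g z)).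
  { pose proof (distC_tri (g x) (g u) (g z)). fold d0 in H1. lra. }
  destruct (arc_le_compl_dist (g u) (g z)) as [Huz Hzu].
  repeat split; try lra; intros Hg; apply Rlt_le_trans with (2 * eta); try lra.
  - apply arc_lt_of_dist; [exact Hguw|].
    specialize (Hg _ _ _ Huwz). unfold cyclic, cyclicR in Hg.
    fold (arc (g u) (g w)) (arc (g u) (g z)) in Hg. lra.
  - apply arc_lt_of_dist; [rewrite distC_sym; exact Hguw|].
    specialize (Hg _ _ _ Huwz). apply cyclic_arc_add in Hg. pose proof (arc_range (g z) (g w)). lra.
Qed.

Lemma Rmin_div_pos a b c : 0 < c -> Rmin (a / c) (b / c) = Rmin a b / c.
Proof.
  intros Hc. unfold Rmin. destruct (Rle_dec (a / c) (b / c)) as [H1|H1];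
    destruct (Rle_dec a b) as [H2|H2]; auto; exfalso.
  - apply H2, Rmult_le_reg_r with (/ c); [now apply Rinv_0_lt_compat|exact H1].
  - apply H1, Rmult_le_compat_r; [left; now apply Rinv_0_lt_compat|exact H2].
Qed.

Section CircleCase.

Variables (k : nat) (g : nat -> pt Circle -> pt Circle) (inv : nat -> nat) (q : R).
Hypothesis k_ge2 : (2 <= k)%nat.
Hypothesis inv_lt : forall j, (j < k)%nat -> (inv j < k)%nat.
Hypothesis inv_inv : forall j, (j < k)%nat -> inv (inv j) = j.
Hypothesis g_inverse : forall j, (j < k)%nat -> inverse_of Circle (g j) (g (inv j)).
Hypothesis g_cont : forall j, (j < k)%nat -> continuous_on Circle (g j).
Hypothesis q_pos : 0 < q.
Hypothesis q_growth : q * (INR k - 1) < 1.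

Definition orientation (j : nat) : bool :=
  if excluded_middle_informative (preserves_cyclic (g j)) then true else false.

Lemma orientation_true j : orientation j = true -> preserves_cyclic (g j).
Proof. unfold orientation. destruct excluded_middle_informative; easy. Qed.

Lemma orientation_false j : (j < k)%nat -> orientation j = false -> reverses_cyclic (g j).
Proof.
  intros Hj. unfold orientation. destruct excluded_middle_informative as [|Hnp]; [easy|intros _].
  destruct (homeoC_orientation (g j) (g (inv j)) (g_inverse j Hj) (g_cont j Hj)); tauto.
Qed.

Lemma orientation_inv j : (j < k)%nat -> orientation (inv j) = orientation j.
Proof.
  intros Hj. pose proof (preserves_cyclic_inverse (g j) (g (inv j)) (g_inverse j Hj) (g_cont j Hj)
    (g_cont (inv j) (inv_lt j Hj))).
  unfold orientation. do 2 destruct excluded_middle_informative; tauto.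
Qed.

(* An orientation-reversing generator swaps the endpoints, so that the image of the
   counterclockwise arc from x to y is again described counterclockwise. *)
Definition actC (j : nat) (p : pt Circle * pt Circle) :=
  if orientation j then (g j (fst p), g j (snd p)) else (g j (snd p), g j (fst p)).

Definition arcC (p : pt Circle * pt Circle) : R := arc (fst p) (snd p).

Definition unit_cost (p : pt Circle * pt Circle) : R := 1.

Definition word_distC (x y : pt Circle) : R := word_series _ k actC inv q arcC (x, y).

Definition scaleC : R := word_series _ k actC inv q unit_cost (embC 0, embC 0).

Lemma arcC_bounded : bounded_cost _ arcC.
Proof. intros [x y]. unfold arcC. pose proof (arc_range x y). simpl. lra. Qed.

Lemma actC_back j : (j < k)%nat -> forall p, actC (inv j) (actC j p) = p.
Proof.
  intros Hj [a b]. unfold actC. rewrite (orientation_inv j Hj). destruct (g_inverse j Hj) as [Hl _].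
  destruct (orientation j); simpl; now rewrite !Hl.
Qed.

Lemma word_distC_ge x y : arc x y <= word_distC x y.
Proof. exact (word_series_ge_cost _ _ _ _ k_ge2 inv_lt _ q_pos q_growth _ arcC_bounded (x, y)). Qed.

Lemma word_distC_ge0 x y : 0 <= word_distC x y.
Proof. exact (word_series_ge0 _ _ _ _ k_ge2 inv_lt _ q_pos q_growth _ arcC_bounded (x, y)). Qed.

Lemma word_distC_add x y z : cyclic x y z -> word_distC x y + word_distC y z = word_distC x z.
Proof.
  intros Hxyz.
  apply (word_series_add_rel _ _ _ _ k_ge2 inv_lt _ q_pos q_growth
    (fun b c a => exists x y z, cyclic x y z /\ a = (x, z) /\
       ((b = (x, y) /\ c = (y, z)) \/ (b = (y, z) /\ c = (x, y))))
    _ _ _ arcC_bounded arcC_bounded).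
  - intros j b c a Hj (x0 & y0 & z0 & Hc & -> & Hbc). unfold actC.
    destruct (orientation j) eqn:Eo.
    + exists (g j x0), (g j y0), (g j z0). split; [now apply orientation_true|].
      split; [reflexivity|]. destruct Hbc as [[-> ->]|[-> ->]]; [left|right]; auto.
    + exists (g j z0), (g j y0), (g j x0). split; [now apply (orientation_false j Hj Eo)|].
      split; [reflexivity|]. destruct Hbc as [[-> ->]|[-> ->]]; [right|left]; auto.
  - intros b c a (x0 & y0 & z0 & Hc & -> & Hbc). unfold arcC.
    apply cyclic_arc_add in Hc. destruct Hbc as [[-> ->]|[-> ->]]; simpl; lra.
  - exists x, y, z. auto.
Qed.

Lemma word_distC_diag x : word_distC x x = 0.
Proof.
  pose proof (word_distC_add x x x). unfold cyclic, cyclicR in H. lra.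
Qed.

Lemma word_distC_compl x y : x <> y -> word_distC x y + word_distC y x = scaleC.
Proof.
  intros Hxy.
  apply (word_series_add_rel _ _ _ _ k_ge2 inv_lt _ q_pos q_growth
    (fun b c _ => c = (snd b, fst b) /\ fst b <> snd b) _ _ _ arcC_bounded arcC_bounded).
  - intros j b c a Hj [-> Hne]. destruct (g_inverse j Hj) as [Hl _].
    unfold actC. destruct (orientation j); simpl; split; auto; intros E; apply Hne;
      rewrite <- (Hl (fst b)), <- (Hl (snd b)), E; reflexivity.
  - intros b c a [-> Hne]. unfold arcC, unit_cost. simpl. now apply arc_compl.
  - simpl. auto.
Qed.

Lemma word_distC_act j x y : (j < k)%nat ->
  (if orientation j then word_distC (g j x) (g j y) else word_distC (g j y) (g j x))
  <= / q * word_distC x y.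
Proof.
  intros Hj. pose proof (word_series_act _ _ _ _ k_ge2 inv_lt _ q_pos q_growth _ j arcC_bounded Hj
    (inv_inv j Hj) (actC_back j Hj) (x, y)) as H.
  unfold word_distC. destruct (orientation j) eqn:E;
    [replace (actC j (x, y)) with (g j x, g j y) in H by (unfold actC; now rewrite E)
    |replace (actC j (x, y)) with (g j y, g j x) in H by (unfold actC; now rewrite E)]; exact H.
Qed.

Lemma word_distC_small x e : 0 < e -> exists d, 0 < d /\ forall u w,
  dist Circle x u < d -> dist Circle x w < d -> arc u w < d -> word_distC u w < e.
Proof.
  intros He.
  destruct (word_series_small _ _ actC _ k_ge2 inv_lt _ q_pos q_growth _ g
    (fun x d p => dist Circle x (fst p) < d /\ dist Circle x (snd p) < d /\ arc (fst p) (snd p) < d))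
    with (c := arcC) (x := x) (e := e) as [d [Hd Hd']]; auto.
  - intros x0 d1 d2 a Hd12 [H1 [H2 H3]]; repeat split; lra.
  - intros j x0 e0 Hj He0.
    destruct (arc_image_small (g j) (g (inv j)) (g_inverse j Hj) (g_cont j Hj) x0 e0 He0)
      as [d [Hd Hd']].
    exists d. split; auto. intros [u w] [H1 [H2 H3]]. cbn [fst snd] in *.
    destruct (Hd' u w H1 H2 H3) as (Hu & Hw & Hpres & Hrev).
    unfold actC. destruct (orientation j) eqn:E; cbn [fst snd]; repeat split; auto.
    + now apply Hpres, orientation_true.
    + now apply Hrev, (orientation_false j Hj).
  - apply arcC_bounded.
  - intros x0 e0 He0. exists e0. split; auto. intros [u w] [_ [_ H]]. exact H.
  - exists d. split; auto. intros u w H1 H2 H3. apply (Hd' (u, w)). repeat split; auto.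
Qed.

Lemma scaleC_ge1 : 1 <= scaleC.
Proof.
  set (y := embC (1/2)).
  assert (Hy : embC 0 <> y).
  { intros E. apply (f_equal coordC) in E. unfold y in E. rewrite !coord_embC, !wrap01_id in E; lra. }
  rewrite <- (word_distC_compl _ _ Hy). pose proof (arc_compl _ _ Hy).
  pose proof (word_distC_ge (embC 0) y). pose proof (word_distC_ge y (embC 0)). lra.
Qed.

Definition rhoC (x y : pt Circle) : R := Rmin (word_distC x y) (word_distC y x).

Lemma rhoC_ge_dist x y : dist Circle x y <= rhoC x y.
Proof.
  rewrite distC. unfold rhoC. pose proof (word_distC_ge x y). pose proof (word_distC_ge y x).
  unfold Rmin. repeat destruct Rle_dec; lra.
Qed.

Lemma rhoC_small x e : 0 < e -> exists d, 0 < d /\ forall y, dist Circle x y < d -> rhoC x y < e.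
Proof.
  intros He. destruct (word_distC_small x e He) as [d [Hd Hd']]. exists d. split; auto.
  intros y Hy. pose proof (dist_self Circle x) as Hxx.
  assert (Harc : arc x y < d \/ arc y x < d) by (rewrite distC in Hy; unfold Rmin in Hy;
    destruct Rle_dec; [left|right]; lra).
  unfold rhoC. destruct Harc as [Harc|Harc].
  - eapply Rle_lt_trans; [apply Rmin_l|]. apply Hd'; lra.
  - eapply Rle_lt_trans; [apply Rmin_r|]. apply Hd'; lra.
Qed.

Lemma rhoC_act j x y : (j < k)%nat -> rhoC (g j x) (g j y) <= / q * rhoC x y.
Proof.
  intros Hj. pose proof (word_distC_act j x y Hj) as Hxy. pose proof (word_distC_act j y x Hj) as Hyx.
  assert (0 < / q) by (apply Rinv_0_lt_compat; lra).
  unfold rhoC. destruct (orientation j); unfold Rmin; repeat destruct Rle_dec; nra.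
Qed.

Definition posC (x : pt Circle) : R := word_distC (embC 0) x / scaleC.

Definition conjC (x : pt Circle) : pt Circle := embC (posC x).

Lemma posC_range x : 0 <= posC x < 1.
Proof.
  pose proof scaleC_ge1. unfold posC. split; [apply Rdiv_le_0_compat; [apply word_distC_ge0|lra]|].
  destruct (classic (x = embC 0)) as [->|Hx]; [rewrite word_distC_diag; unfold Rdiv; lra|].
  apply Rmult_lt_reg_r with scaleC; [lra|].
  unfold Rdiv. rewrite Rmult_assoc, Rinv_l, Rmult_1_r, Rmult_1_l by lra.
  pose proof (word_distC_compl _ _ (not_eq_sym Hx)). pose proof (word_distC_ge x (embC 0)).
  assert (0 < arc x (embC 0)) by (apply arcR_pos; try apply coordC_range; intros E; apply Hx, pt_eq, E).
  lra.
Qed.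

Lemma coord_conjC x : coordC (conjC x) = posC x.
Proof. unfold conjC. rewrite coord_embC. apply wrap01_id, posC_range. Qed.

Lemma posC_sub x y : coordC x <= coordC y -> posC y - posC x = word_distC x y / scaleC.
Proof.
  intros Hxy. pose proof scaleC_ge1. unfold posC. rewrite <- (word_distC_add (embC 0) x y); [field; lra|].
  unfold cyclic, cyclicR. rewrite coord_embC, wrap01_id by lra.
  pose proof (coordC_range x). pose proof (coordC_range y). unfold in01 in *. arc_cases; lra.
Qed.

Lemma dist_conjC_ordered x y : coordC x <= coordC y ->
  dist Circle (conjC x) (conjC y) = rhoC x y / scaleC.
Proof.
  intros Hxy. pose proof scaleC_ge1. destruct (classic (x = y)) as [->|Hne].
  - rewrite dist_self. unfold rhoC. rewrite word_distC_diag, Rmin_left; unfold Rdiv; lra.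
  - rewrite distC_abs, !coord_conjC, Rabs_minus_sym, posC_sub by auto.
    rewrite Rabs_pos_eq by (apply Rdiv_le_0_compat; [apply word_distC_ge0|lra]).
    replace (1 - word_distC x y / scaleC) with (word_distC y x / scaleC).
    + apply Rmin_div_pos. lra.
    + pose proof (word_distC_compl x y Hne).
      replace (word_distC y x) with (scaleC - word_distC x y) by lra. field. lra.
Qed.

Lemma dist_conjC x y : dist Circle (conjC x) (conjC y) = rhoC x y / scaleC.
Proof.
  destruct (Rle_dec (coordC x) (coordC y)); [now apply dist_conjC_ordered|].
  rewrite distC_sym. unfold rhoC. rewrite Rmin_comm. apply dist_conjC_ordered. lra.
Qed.

Lemma coord_embC_id s : 0 <= s < 1 -> coordC (embC s) = s.
Proof. intros Hs. rewrite coord_embC. now apply wrap01_id. Qed.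

Lemma posC_near_one v : v < 1 -> exists t, 1/2 <= t < 1 /\ v <= posC (embC t).
Proof.
  intros Hv. pose proof scaleC_ge1. set (o := embC 0).
  destruct (word_distC_small o ((1 - v) * scaleC)) as [d [Hd Hd']]; [nra|].
  pose proof (Rmax_l (1/2) (1 - d/2)). pose proof (Rmax_r (1/2) (1 - d/2)).
  set (t := Rmax (1/2) (1 - d/2)) in *.
  assert (Ht : 1/2 <= t < 1) by (split; [lra|apply Rmax_lub_lt; lra]).
  exists t. split; auto. set (y := embC t).
  assert (Hy : coordC y = t) by (apply coord_embC_id; lra).
  assert (Ho : coordC o = 0) by (apply coord_embC_id; lra).
  assert (Hyo : o <> y) by (intros E; apply (f_equal coordC) in E; lra).
  assert (Harc : arc y o < d) by (unfold arc; rewrite Hy, Ho; unfold arcR; destruct Rle_dec; lra).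
  assert (Hsmall : word_distC y o < (1 - v) * scaleC).
  { apply Hd'; [|rewrite dist_self; exact Hd|exact Harc].
    rewrite distC. eapply Rle_lt_trans; [apply Rmin_r|exact Harc]. }
  unfold posC. fold o y. pose proof (word_distC_compl o y Hyo).
  apply Rmult_le_reg_r with scaleC; [lra|]. unfold Rdiv. rewrite Rmult_assoc, Rinv_l by lra. nra.
Qed.

Lemma posC_continuous t : t < 1 -> continuous_on_segment (fun s => posC (embC s)) 0 t.
Proof.
  intros Ht1 s Hs e He. pose proof scaleC_ge1.
  destruct (word_distC_small (embC s) (e * scaleC)) as [d [Hd Hd']]; [nra|].
  exists d. split; auto.
  assert (Hstep : forall a b, 0 <= a <= t -> 0 <= b <= t -> a <= b -> b - a < d ->
    dist Circle (embC s) (embC a) < d -> dist Circle (embC s) (embC b) < d ->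
    Rabs (posC (embC b) - posC (embC a)) < e).
  { intros a b Ha Hb Hab Hba Hsa Hsb. rewrite posC_sub by (rewrite !coord_embC_id; lra).
    rewrite Rabs_pos_eq by (apply Rdiv_le_0_compat; [apply word_distC_ge0|lra]).
    apply Rmult_lt_reg_r with scaleC; [lra|].
    unfold Rdiv. rewrite Rmult_assoc, Rinv_l, Rmult_1_r by lra. apply Hd'; auto.
    unfold arc. rewrite !coord_embC_id by lra. unfold arcR. destruct Rle_dec; lra. }
  intros s' Hs' Hss'. pose proof (dist_self Circle (embC s)).
  assert (Hnear : dist Circle (embC s) (embC s') < d).
  { eapply Rle_lt_trans; [apply dist_embC; lra|]. now rewrite Rabs_minus_sym. }
  pose proof (Rle_abs (s' - s)) as Habs1. pose proof (Rle_abs (s - s')) as Habs2.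
  rewrite Rabs_minus_sym in Habs2.
  destruct (Rle_dec s s').
  - apply Hstep; auto; lra.
  - rewrite Rabs_minus_sym. apply Hstep; auto; lra.
Qed.

Lemma conjC_surjective u : exists x, conjC x = u.
Proof.
  pose proof (coordC_range u) as Hu. unfold in01 in Hu.
  destruct (posC_near_one (coordC u) ltac:(lra)) as [t [Ht Hut]].
  assert (H0 : posC (embC 0) = 0) by (unfold posC; rewrite word_distC_diag; unfold Rdiv; ring).
  destruct (IVT_segment (fun s => posC (embC s)) 0 t (coordC u) ltac:(lra) (posC_continuous t ltac:(lra)))
    as [s [Hs Es]]; [lra|].
  exists (embC s). apply pt_eq. rewrite coord_conjC. exact Es.
Qed.

Theorem circle_case :
  exists h hinv, is_homeo_with_inv Circle h hinv /\
    forall j, (j < k)%nat -> lipschitz_with Circle (/ q) (fun x => h (g j (hinv x))).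
Proof.
  pose proof scaleC_ge1.
  exists conjC, (conjugator_inv _ conjC).
  split; [apply (conjugator_homeo _ _ rhoC scaleC)|intros j Hj;
    apply (conjugate_lipschitz _ _ rhoC scaleC)]; auto using conjC_surjective,
    dist_conjC, rhoC_ge_dist, rhoC_small, rhoC_act; lra.
Qed.


End CircleCase.

Lemma inverse_unique M (f g1 g2 : pt M -> pt M) :
  inverse_of M f g1 -> inverse_of M f g2 -> forall x, g1 x = g2 x.
Proof. intros [H1 H2] [H3 H4] x. rewrite <- (H4 x) at 1. now rewrite H1. Qed.

(* The involution property uses that the listed homeomorphisms are pairwise distinct. *)
Lemma generator_inverse_index M (gens : list (pt M -> pt M)) :
  (forall f, In f gens -> exists g, In g gens /\ inverse_of M f g) ->
  (forall i j, (i < length gens)%nat -> (j < length gens)%nat -> i <> j ->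
     exists x, nth i gens (fun y => y) x <> nth j gens (fun y => y) x) ->
  exists inv : nat -> nat, forall j, (j < length gens)%nat ->
    (inv j < length gens)%nat /\ inv (inv j) = j /\
    inverse_of M (nth j gens (fun y => y)) (nth (inv j) gens (fun y => y)).
Proof.
  intros Hsym Hdist. set (gen j := nth j gens (fun y : pt M => y)).
  set (P j i := (i < length gens)%nat /\ inverse_of M (gen j) (gen i)).
  assert (HP : forall j, (j < length gens)%nat -> exists i, P j i).
  { intros j Hj. destruct (Hsym (gen j)) as [f [Hf Hfi]]; [apply nth_In; auto|].
    destruct (In_nth gens f (fun y => y) Hf) as [i [Hi Ei]]. exists i. split; auto.
    unfold gen. now rewrite Ei. }
  set (inv j := epsilon (inhabits 0%nat) (P j)).
  assert (Hinv : forall j, (j < length gens)%nat -> P j (inv j))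
    by (intros j Hj; apply (epsilon_spec (inhabits 0%nat) (P j)), HP, Hj).
  exists inv. intros j Hj. destruct (Hinv j Hj) as [H1 H2]. split; [exact H1|split; [|exact H2]].
  destruct (Hinv (inv j) H1) as [H3 H4].
  destruct (Nat.eq_dec (inv (inv j)) j) as [E|E]; auto. exfalso.
  destruct (Hdist _ _ H3 Hj E) as [x Hx]. apply Hx.
  apply (inverse_unique M (gen (inv j))); auto. destruct H2; split; auto.
Qed.

Lemma contraction_of_entropy_bound (k : nat) eps : (2 <= k)%nat -> ln (INR k - 1) < eps ->
  0 < exp (- eps) /\ exp (- eps) * (INR k - 1) < 1 /\ / exp (- eps) = exp eps.
Proof.
  intros Hk Heps. assert (Hk1 : 1 <= INR k - 1) by (pose proof (le_INR 2 k Hk) as H2; simpl in H2; lra).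
  split; [apply exp_pos|split].
  - rewrite <- (exp_ln (INR k - 1)) by lra. rewrite <- exp_plus.
    apply Rlt_le_trans with (exp 0); [apply exp_increasing; lra|rewrite exp_0; lra].
  - rewrite exp_Ropp. apply Rinv_inv.
Qed.

Theorem mainTheorem1 (M : Manifold1) (gens : list (pt M -> pt M)) :
  (forall f, In f gens -> is_homeo M f) ->
  (forall f, In f gens -> exists g, In g gens /\ inverse_of M f g) ->
  (forall i j, (i < length gens)%nat -> (j < length gens)%nat -> i <> j ->
     exists x, nth i gens (fun y => y) x <> nth j gens (fun y => y) x) ->
  (2 <= length gens)%nat ->
  forall eps : R, ln (INR (length gens) - 1) < eps ->
  exists h hinv : pt M -> pt M,
    is_homeo_with_inv M h hinv /\
    forall g, In g gens ->
      lipschitz_with M (exp eps) (fun x => h (g (hinv x))).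
Proof.
  intros Hhom Hsym Hdist Hk eps Heps.
  set (gen j := nth j gens (fun y : pt M => y)).
  destruct (generator_inverse_index M gens Hsym Hdist) as [inv Hinv].
  assert (Hcont : forall j, (j < length gens)%nat -> continuous_on M (gen j)).
  { intros j Hj. destruct (Hhom (gen j)) as [gi [_ [Hc _]]]; [apply nth_In|]; auto. }
  destruct (contraction_of_entropy_bound _ eps Hk Heps) as (Hq & Hqk & Eq).
  assert (Hconj : exists h hinv, is_homeo_with_inv M h hinv /\ forall j, (j < length gens)%nat ->
    lipschitz_with M (/ exp (- eps)) (fun x => h (gen j (hinv x)))).
  { destruct M; [apply (circle_case _ gen inv)|apply (interval_case _ gen inv)]; auto;
      intros j Hj; apply (Hinv j Hj). }
  destruct Hconj as [h [hinv [Hh Hlip]]]. exists h, hinv. split; auto.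
  intros f Hf. destruct (In_nth gens f (fun y => y) Hf) as [j [Hj <-]].
  rewrite <- Eq. apply (Hlip j Hj).
Qed.
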